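(* Let $\boldsymbol\Gamma_n$ be a Haar-distributed random matrix on $O(n)$ with $n\ge3$, let $1\le p,q\le n$, let $\mathbf Z_n$ be the $p\times q$ upper-left submatrix of $\boldsymbol\Gamma_n$, and let $\lambda_1,\dots,\lambda_q$ be the eigenvalues of $\mathbf Z_n'\mathbf Z_n$. Then $$\mathbb E\sum_{i=1}^q\lambda_i^3=\frac{pq}{n(n+2)(n+4)}\big[p^2+q^2+3pq+3(p+q)+4\big]+\frac{pq(p-1)(q-1)}{(n-1)n(n+2)(n+4)}\Big[\frac{2(p-2)(q-2)}{n-2}-3(p+q)\Big].$$ *)

From HB Require Import structures.
From mathcomp Require Import all_boot all_order all_algebra.
From mathcomp Require Import all_classical all_reals all_analysis.
Set Implicit Arguments. Unset Strict Implicit. Unset Printing Implicit Defensive.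
Import Order.TTheory GRing.Theory Num.Theory.
Local Open Scope classical_set_scope.
Local Open Scope ring_scope.

Definition is_orthogonal (R : realType) (n : nat) (A : 'M[R]_n) : Prop :=
  A *m A^T = 1%:M.

Definition mx_of_tuple (R : realType) (n : nat) (t : (n * n).-tuple R)
  : 'M[R]_n :=
  \matrix_(i < n, j < n) tnth t (mxvec_index i j).

(* Borel sets of n x n real matrices: the Borel sets of R^(n*n) transported
   through the coordinate identification. *)
Definition mxBorel (R : realType) (n : nat) (B : set 'M[R]_n) : Prop :=
  measurable (@mx_of_tuple R n @^-1` B).

(* G : Omega -> 'M_n is a Haar-distributed random matrix on O(n):
   it is measurable, takes values in O(n), and its law is invariant under
   left multiplication by every orthogonal matrix (the Haar probability
   measure on O(n) is the unique such law). *)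
Definition haar_orthogonal (d : measure_display) (Omega : measurableType d)
  (R : realType) (P : probability Omega R) (n : nat) (G : Omega -> 'M[R]_n)
  : Prop :=
  [/\ forall B, mxBorel B -> measurable (G @^-1` B),
      forall w, is_orthogonal (G w)
    & forall U : 'M[R]_n, is_orthogonal U ->
        forall B, mxBorel B ->
          P (G @^-1` B) = P ((fun w => U *m G w) @^-1` B)].

Definition ul_submx (R : Type) (n p q : nat) (hp : (p <= n)%N) (hq : (q <= n)%N)
  (A : 'M[R]_n) : 'M[R]_(p, q) :=
  \matrix_(i < p, j < q) A (widen_ord hp i) (widen_ord hq j).

From Pilot Require Import Defs.
From HB Require Import structures.
From mathcomp Require Import all_boot all_order all_algebra.
From mathcomp Require Import all_classical all_reals all_analysis.
From mathcomp Require Import measurable_realfun.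
From mathcomp Require Import fingroup perm complex ring lra.

(* Let X be the projection onto the span of the first q columns of the Haar
   matrix.  Then ZZ' is the upper-left p x p block of X, so
   sum_i lambda_i^3 = tr (Z'Z)^3 = tr (ZZ')^3 = sum_{a,b,c < p} x_ab x_bc x_ca.
   The law of X is invariant under conjugation by orthogonal matrices.
   Permutations reduce every moment of X to a few canonical ones, sign changes
   kill those in which some index occurs an odd number of times, and the
   identities X^2 = X and tr X = q, together with invariance under a single
   reflection mixing two coordinates, give enough linear relations to compute
   the canonical moments up to degree three. *)

Set Implicit Arguments. Unset Strict Implicit. Unset Printing Implicit Defensive.
Import Order.TTheory GRing.Theory Num.Theory.
Local Open Scope classical_set_scope.
Local Open Scope ring_scope.

Section TrigPowers.
Variables (K : comNzRingType) (n : nat).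
Implicit Types S T : 'M[K]_n.

Lemma is_trig_mxM S T : is_trig_mx S -> is_trig_mx T -> is_trig_mx (S *m T).
Proof.
move=> /is_trig_mxP S_trig /is_trig_mxP T_trig.
apply/is_trig_mxP => i j lt_ij; rewrite mxE big1 // => k _.
have [lt_ik|le_ki] := ltnP i k; first by rewrite S_trig ?mul0r.
by rewrite T_trig ?mulr0 // (leq_ltn_trans le_ki).
Qed.

Lemma trig_mulmx_diag S T i :
  is_trig_mx S -> is_trig_mx T -> (S *m T) i i = S i i * T i i.
Proof.
move=> /is_trig_mxP S_trig /is_trig_mxP T_trig.
rewrite mxE (bigD1 i) //= big1 ?addr0 // => k ne_ki.
have [lt_ik|lt_ki|eq_ik] := ltngtP i k; first by rewrite S_trig ?mul0r.
  by rewrite T_trig ?mulr0.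
by rewrite (val_inj eq_ik) eqxx in ne_ki.
Qed.

Lemma is_trig_mxX T k : is_trig_mx T -> is_trig_mx (T ^+ k).
Proof.
move=> T_trig; elim: k => [|k IHk]; first exact: scalar_mx_is_trig.
by rewrite exprS -mulmxE is_trig_mxM.
Qed.

Lemma trig_mxX_diag T k i : is_trig_mx T -> (T ^+ k) i i = T i i ^+ k.
Proof.
move=> T_trig; elim: k => [|k IHk]; first by rewrite mxE eqxx.
by rewrite exprS -mulmxE trig_mulmx_diag ?is_trig_mxX // IHk exprS.
Qed.

End TrigPowers.

Section Conjugation.
Variables (F : fieldType) (n : nat) (V : 'M[F]_n).
Hypothesis V_unit : V \in unitmx.

Lemma conjmxX A k : conjmx V (A ^+ k) = conjmx V A ^+ k.
Proof.
elim: k => [|k IHk]; first by rewrite conjmx_scalar ?row_free_unit.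
by rewrite !exprS -!mulmxE conjmxM ?inE ?stablemx_unit // IHk.
Qed.

Lemma char_poly_conjmx A : char_poly (conjmx V A) = char_poly A.
Proof.
rewrite conjumx // /char_poly /char_poly_mx.
have -> : 'X%:M - map_mx polyC (V *m A *m invmx V) =
  map_mx polyC V *m ('X%:M - map_mx polyC A) *m map_mx polyC (invmx V).
  rewrite mulmxBr mulmxBl !map_mxM; congr (_ - _).
  by rewrite scalar_mxC -mulmxA -map_mxM mulmxV // map_mx1 mulmx1.
rewrite !det_mulmx mulrAC -det_mulmx -map_mxM mulmxV //.
by rewrite map_mx1 det1 mul1r.
Qed.

Lemma mxtrace_conjmx A : \tr (conjmx V A) = \tr A.
Proof. by rewrite conjumx // mxtrace_mulC mulmxA mulVmx ?mul1mx. Qed.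

End Conjugation.

Lemma mxtrace_exp_roots (C : numClosedFieldType) n (A : 'M[C]_n)
    (mu : 'I_n -> C) k :
  char_poly A = \prod_(i < n) ('X - (mu i)%:P) ->
  \tr (A ^+ k) = \sum_(i < n) mu i ^+ k.
Proof.
move=> charA.
have [|V V_unitary] := @cotrigonalization _ _ [:: A].
  by move=> B1 B2; rewrite !inE => /eqP-> /eqP->.
rewrite /= andbT => T_trig; set T := conjmx V A in T_trig.
have V_unit := unitarymx_unit V_unitary.
have diagT : perm_eq [seq T i i | i <- enum 'I_n] [seq mu i | i <- enum 'I_n].
  apply: prod_XsubC_eq; rewrite !big_map -!enumT !big_enum -charA.
  by rewrite -(char_poly_conjmx V_unit) char_poly_trig.
rewrite -(mxtrace_conjmx V_unit) conjmxX //.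
transitivity (\sum_(x <- [seq T i i | i <- enum 'I_n]) x ^+ k).
  by rewrite big_map big_enum; apply: eq_bigr => i _; rewrite trig_mxX_diag.
by rewrite (perm_big _ diagT) big_map big_enum.
Qed.

Lemma mxtrace_exp_real_roots (R : rcfType) n (A : 'M[R]_n)
    (lam : 'I_n -> R) k :
  char_poly A = \prod_(i < n) ('X - (lam i)%:P) ->
  \tr (A ^+ k) = \sum_(i < n) lam i ^+ k.
Proof.
move=> charA; pose f := real_complex R; apply: (fmorph_inj f).
rewrite -trace_map_mx rmorphXn rmorph_sum (mxtrace_exp_roots _ (mu := f \o lam)).
  by apply: eq_bigr => i _; rewrite rmorphXn.
rewrite -map_char_poly charA rmorph_prod; apply: eq_bigr => i _.
by rewrite /= map_polyXsubC.
Qed.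

Lemma mxtrace_cube (K : comNzRingType) m (W : 'M[K]_m) :
  \tr (W ^+ 3) = \sum_a \sum_b \sum_c W a b * W b c * W c a.
Proof.
rewrite !exprS expr0 mulr1 -!mulmxE mulmxA /mxtrace; apply: eq_bigr => a _.
rewrite mxE; under eq_bigr do rewrite mxE big_distrl /=.
by rewrite exchange_big; apply: eq_bigr => b _; apply: eq_bigr => c _.
Qed.

Lemma gram_exp (K : comNzRingType) m k (Z : 'M[K]_(m, k)) j :
  (Z^T *m Z) ^+ j.+1 = Z^T *m (Z *m Z^T) ^+ j *m Z.
Proof.
elim: j => [|j IHj]; first by rewrite expr1 expr0 mulmx1.
by rewrite exprS IHj [in RHS]exprS -!mulmxE !mulmxA.
Qed.

Lemma mxtrace_gram_exp (K : comNzRingType) m k (Z : 'M[K]_(m, k)) j :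
  \tr ((Z^T *m Z) ^+ j.+1) = \tr ((Z *m Z^T) ^+ j.+1).
Proof. by rewrite gram_exp mxtrace_mulC mulmxA exprS -mulmxE. Qed.

Lemma perm_move2 (T : finType) (x y x' y' : T) : x != y -> x' != y' ->
  exists s : {perm T}, s x = x' /\ s y = y'.
Proof.
move=> xy x'y'; set y1 := tperm x x' y.
have y1x' : y1 != x' by rewrite -[x'](tpermL x x') (inj_eq perm_inj) eq_sym.
exists (tperm x x' * tperm y1 y')%g; rewrite !permM tpermL -/y1 tpermL.
by split=> //; rewrite tpermD // eq_sym.
Qed.

Lemma perm_move3 (T : finType) (x y z x' y' z' : T) :
  [&& x != y, x != z & y != z] -> [&& x' != y', x' != z' & y' != z'] ->
  exists s : {perm T}, [/\ s x = x', s y = y' & s z = z'].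
Proof.
case/and3P=> xy xz yz /and3P[x'y' x'z' y'z'].
have [s [sx sy]] := perm_move2 xy x'y'; set z1 := s z.
have z1x' : z1 != x' by rewrite -sx (inj_eq perm_inj) eq_sym.
have z1y' : z1 != y' by rewrite -sy (inj_eq perm_inj) eq_sym.
exists (s * tperm z1 z')%g; rewrite !permM sx sy -/z1 tpermL.
by split=> //; rewrite tpermD // eq_sym.
Qed.

Section SumsOverOrdinals.
Variables (R : comNzRingType) (N : nat).
Implicit Types (f : 'I_N -> R) (a b : 'I_N) (x y z : R).

Lemma sum_delta a (F : 'I_N -> R) : \sum_c (c == a)%:R * F c = F a.
Proof.
rewrite (eq_bigr (fun c => if c == a then F c else 0)) => [|c _].
  by rewrite -big_mkcond big_pred1_eq.
by case: (c == a); rewrite ?mul1r ?mul0r.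
Qed.

Lemma sum_const_but1 f a x y :
  f a = x -> (forall c, c != a -> f c = y) ->
  \sum_c f c = x + (N%:R - 1) * y.
Proof.
move=> fa fc; transitivity (\sum_c (y + (c == a)%:R * (x - y))).
  apply: eq_bigr => c _; have [->|ca] := eqVneq c a.
    by rewrite fa mul1r addrC subrK.
  by rewrite fc ?mul0r ?addr0.
by rewrite big_split /= sum_delta sumr_const card_ord -mulr_natl; ring.
Qed.

Lemma sum_const_but2 f a b x y z : a != b ->
  f a = x -> f b = y -> (forall c, c != a -> c != b -> f c = z) ->
  \sum_c f c = x + y + (N%:R - 2) * z.
Proof.
move=> ab fa fb fc.
transitivity (\sum_c (z + (c == a)%:R * (x - z) + (c == b)%:R * (y - z))).
  apply: eq_bigr => c _; have [->|ca] := eqVneq c a.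
    by rewrite fa (negPf ab) mul1r mul0r addr0 addrC subrK.
  have [->|cb] := eqVneq c b; last by rewrite fc ?mul0r ?addr0.
  by rewrite fb mul1r mul0r addr0 addrC subrK.
by rewrite !big_split /= !sum_delta sumr_const card_ord -mulr_natl; ring.
Qed.

Lemma mulmx_tr_entry_two_point (A X : 'M[R]_N) i a b x y :
  (forall j, A i j = x * (j == a)%:R + y * (j == b)%:R) ->
  (A *m X *m A^T) i i = x ^+ 2 * X a a + x * y * (X a b + X b a) + y ^+ 2 * X b b.
Proof.
move=> Ai.
have AX k : (A *m X) i k = x * X a k + y * X b k.
  rewrite mxE (eq_bigr (fun j => (j == a)%:R * (x * X j k) +
                                  (j == b)%:R * (y * X j k))) => [|j _].
    by rewrite big_split /= !sum_delta.
  by rewrite Ai; ring.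
rewrite mxE (eq_bigr (fun k => (k == a)%:R * (x * (x * X a k + y * X b k)) +
                               (k == b)%:R * (y * (x * X a k + y * X b k)))).
  by rewrite big_split /= !sum_delta; ring.
by move=> k _; rewrite AX mxE Ai; ring.
Qed.

End SumsOverOrdinals.

Section OrthogonalMatrices.
Variables (R : realType) (n : nat).
Implicit Types (A U : 'M[R]_n).

Lemma is_orthogonal_mul U A :
  Defs.is_orthogonal U -> Defs.is_orthogonal A -> Defs.is_orthogonal (U *m A).
Proof.
by move=> U_orth A_orth; rewrite /Defs.is_orthogonal trmx_mul mulmxA -(mulmxA U)
  A_orth mulmx1 U_orth.
Qed.

Lemma orthogonal_entry_le1 A i j : Defs.is_orthogonal A -> `|A i j| <= 1.
Proof.
move=> A_orth; have : A i j ^+ 2 <= 1.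
  have <- : (A *m A^T) i i = 1 by rewrite A_orth mxE eqxx.
  rewrite mxE (bigD1 j) //= !mxE expr2 lerDl.
  by apply: sumr_ge0 => k _; rewrite mxE -expr2 sqr_ge0.
by move=> sq_le1; rewrite ler_norml; apply/andP; split; nra.
Qed.

Lemma perm_mx_orthogonal (sigma : 'S_n) :
  Defs.is_orthogonal (perm_mx sigma : 'M[R]_n).
Proof. by rewrite /Defs.is_orthogonal tr_perm_mx -perm_mxM mulgV perm_mx1. Qed.

Definition sign_mx (k : 'I_n) : 'M[R]_n := diag_mx (\row_i (-1) ^+ (i == k)).

Lemma sign_mx_orthogonal k : Defs.is_orthogonal (sign_mx k).
Proof.
rewrite /Defs.is_orthogonal tr_diag_mx mulmx_diag; apply/matrixP => i j.
by rewrite !mxE; case: (i == k); rewrite ?mulrNN mulr1.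
Qed.

Lemma householder_orthogonal (w : 'cV[R]_n) k :
  k * (w^T *m w) 0 0 = 2 -> Defs.is_orthogonal (1%:M - k *: (w *m w^T)).
Proof.
move=> kww; set A := w *m w^T.
have At : A^T = A by rewrite trmx_mul trmxK.
have AA : A *m A = (w^T *m w) 0 0 *: A.
  by rewrite /A mulmxA -(mulmxA w) {1}[w^T *m w]mx11_scalar mul_mx_scalar -scalemxAl.
rewrite /Defs.is_orthogonal linearB /= trmx1 [X in _ *m (_ - X)]linearZ /= At.
rewrite mulmxBl mul1mx mulmxBr mulmx1 -scalemxAl -scalemxAr AA !scalerA.
by rewrite -mulrA kww; apply/matrixP => i j; rewrite !mxE; ring.
Qed.

End OrthogonalMatrices.
Arguments sign_mx {R n}.

Section OrthogonalIntegrands.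
Variables (R : realType) (n : nat).
Implicit Types (A U : 'M[R]_n) (F : 'M[R]_n -> R).

Definition mx_tuple A : (n * n).-tuple R := [tuple mxvec A 0 k | k < n * n].

Lemma mx_tupleK : cancel mx_tuple (@mx_of_tuple R n).
Proof. by move=> A; apply/matrixP => i j; rewrite mxE tnth_mktuple mxvecE. Qed.

Lemma mx_of_tupleK : cancel (@mx_of_tuple R n) mx_tuple.
Proof.
move=> t; apply: eq_from_tnth => k; rewrite tnth_mktuple.
by case/mxvec_indexP: k => i j; rewrite mxvecE mxE.
Qed.

Lemma mxBorel_preimage_tuple (B : set ((n * n).-tuple R)) :
  measurable B -> mxBorel (mx_tuple @^-1` B).
Proof.
move=> mB; rewrite /mxBorel.
suff -> : @mx_of_tuple R n @^-1` (mx_tuple @^-1` B) = B by [].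
by apply/seteqP; split => t /=; rewrite mx_of_tupleK.
Qed.

Lemma measurable_mulmx_tuple U :
  measurable_fun setT (fun t => mx_tuple (U *m @mx_of_tuple R n t)).
Proof.
apply/measurable_fun_tnthP => k; case/mxvec_indexP: k => i j.
rewrite /comp; under eq_fun do rewrite tnth_mktuple mxvecE mxE.
apply: measurable_sum => l; under eq_fun do rewrite mxE.
exact: measurable_funM (measurable_cst _) (measurable_tnth _).
Qed.

(* Boundedness is only required on O(n), where a Haar matrix takes its
   values; it makes [F] of a Haar matrix integrable. *)
Definition orth_integrand F :=
  measurable_fun setT (F \o @mx_of_tuple R n) /\
  exists c, forall A, Defs.is_orthogonal A -> `|F A| <= c.

Lemma orth_integrand_cst k : orth_integrand (fun _ => k).
Proof. by split; [exact: measurable_cst | exists `|k|]. Qed.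

Lemma orth_integrand_entry i j : orth_integrand (fun A => A i j).
Proof.
split; last by exists 1 => A; apply: orthogonal_entry_le1.
rewrite /comp; under eq_fun do rewrite mxE.
exact: measurable_tnth.
Qed.

Lemma orth_integrandD F1 F2 : orth_integrand F1 -> orth_integrand F2 ->
  orth_integrand (fun A => F1 A + F2 A).
Proof.
move=> [mF1 [c1 F1_le]] [mF2 [c2 F2_le]]; split; first exact: measurable_funD.
exists (c1 + c2) => A A_orth.
by rewrite (le_trans (ler_normD _ _)) // lerD ?F1_le ?F2_le.
Qed.

Lemma orth_integrandM F1 F2 : orth_integrand F1 -> orth_integrand F2 ->
  orth_integrand (fun A => F1 A * F2 A).
Proof.
move=> [mF1 [c1 F1_le]] [mF2 [c2 F2_le]]; split; first exact: measurable_funM.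
by exists (c1 * c2) => A A_orth; rewrite normrM ler_pM ?F1_le ?F2_le.
Qed.

Lemma orth_integrand_sum I (s : seq I) (F : I -> 'M[R]_n -> R) :
  (forall i, orth_integrand (F i)) ->
  orth_integrand (fun A => \sum_(i <- s) F i A).
Proof.
move=> F_int; elim: s => [|i s IHs].
  by under [X in orth_integrand X]funext do rewrite big_nil;
    apply: orth_integrand_cst.
by under [X in orth_integrand X]funext do rewrite big_cons; apply: orth_integrandD.
Qed.

Lemma orth_integrand_prod I (s : seq I) (F : I -> 'M[R]_n -> R) :
  (forall i, orth_integrand (F i)) ->
  orth_integrand (fun A => \prod_(i <- s) F i A).
Proof.
move=> F_int; elim: s => [|i s IHs].
  by under [X in orth_integrand X]funext do rewrite big_nil;
    apply: orth_integrand_cst.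
by under [X in orth_integrand X]funext do rewrite big_cons; apply: orth_integrandM.
Qed.

Lemma orth_integrand_mulmx U F : Defs.is_orthogonal U -> orth_integrand F ->
  orth_integrand (fun A => F (U *m A)).
Proof.
move=> U_orth [mF [c F_le]]; split; last first.
  by exists c => A A_orth; apply: F_le; apply: is_orthogonal_mul.
have -> : (fun A => F (U *m A)) \o @mx_of_tuple R n =
    (F \o @mx_of_tuple R n) \o (fun t => mx_tuple (U *m @mx_of_tuple R n t)).
  by apply/funext => t /=; rewrite mx_tupleK.
exact: measurableT_comp mF (measurable_mulmx_tuple U).
Qed.

End OrthogonalIntegrands.
Arguments mx_tuple {R n}.

Section HaarExpectation.
Variables (d : measure_display) (Omega : measurableType d) (R : realType).
Variables (P : probability Omega R) (n : nat) (G : Omega -> 'M[R]_n).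
Hypothesis HG : haar_orthogonal P G.
Implicit Types (U : 'M[R]_n) (F : 'M[R]_n -> R).

Definition EG F := Rintegral P setT (F \o G).

Lemma measurable_tuple_G : measurable_fun setT (mx_tuple \o G).
Proof.
have [G_mB _ _] := HG; move=> _ B mB.
by rewrite setTI; exact: G_mB _ (mxBorel_preimage_tuple mB).
Qed.

Lemma measurable_tuple_of_mulmx U :
  measurable_fun setT (fun w => mx_tuple (U *m G w)).
Proof.
have -> : (fun w => mx_tuple (U *m G w)) =
    (fun t => mx_tuple (U *m @mx_of_tuple R n t)) \o (mx_tuple \o G).
  by apply/funext => w /=; rewrite mx_tupleK.
exact: measurableT_comp (measurable_mulmx_tuple U) measurable_tuple_G.
Qed.

Lemma orth_integrand_integrable F :
  orth_integrand F -> P.-integrable setT (EFin \o (F \o G)).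
Proof.
move=> [mF [c F_le]]; have [_ G_orth _] := HG.
apply: (@le_integrable _ _ _ P setT measurableT _ (EFin \o cst c)).
- apply/measurable_EFinP.
  have -> : F \o G = (F \o @mx_of_tuple R n) \o (mx_tuple \o G).
    by apply/funext => w /=; rewrite mx_tupleK.
  exact: measurableT_comp mF measurable_tuple_G.
- move=> w _ /=; rewrite lee_fin (le_trans (F_le _ (G_orth w))) //.
  exact: ler_norm.
- exact: finite_measure_integrable_cst.
Qed.

Lemma integral_EG F : orth_integrand F ->
  (\int[P]_w (F (G w))%:E = (EG F)%:E)%E.
Proof.
move=> F_int; rewrite /EG /Rintegral fineK //.
by have := integrable_fin_num measurableT (orth_integrand_integrable F_int).
Qed.

Lemma eq_EG_orth F1 F2 :
  (forall A, Defs.is_orthogonal A -> F1 A = F2 A) -> EG F1 = EG F2.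
Proof.
have [_ G_orth _] := HG; move=> eqF.
by congr Rintegral; apply/funext => w /=; rewrite eqF.
Qed.

Lemma EG1 : EG (fun _ => 1) = 1.
Proof.
rewrite /EG /comp Rintegral_cst // mul1r.
by have := congr1 fine (probability_setT P).
Qed.

Lemma EGZ k F : orth_integrand F -> EG (fun A => k * F A) = k * EG F.
Proof. by move=> F_int; rewrite /EG RintegralZl ?orth_integrand_integrable. Qed.

Lemma EG_sum I (s : seq I) (F : I -> 'M[R]_n -> R) :
  (forall i, orth_integrand (F i)) ->
  EG (fun A => \sum_(i <- s) F i A) = \sum_(i <- s) EG (F i).
Proof.
move=> F_int; elim: s => [|i s IHs].
  have -> : (fun A => \sum_(i <- [::]) F i A) = fun _ => 0.
    by apply/funext => A; rewrite big_nil.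
  by rewrite big_nil /EG /comp Rintegral_cst // mul0r.
rewrite big_cons -IHs /EG -RintegralD ?orth_integrand_integrable //.
  by congr Rintegral; apply/funext => w /=; rewrite big_cons.
exact: orth_integrand_integrable (orth_integrand_sum s F_int).
Qed.

Lemma EG_mulmx U F : Defs.is_orthogonal U -> orth_integrand F ->
  EG F = EG (fun A => F (U *m A)).
Proof.
move=> U_orth F_int; have [_ _ G_inv] := HG; have [mF _] := F_int.
set f := F \o @mx_of_tuple R n.
have mEf := proj2 (measurable_EFinP _ _) mF.
have push phi : measurable_fun setT phi ->
    P.-integrable setT (EFin \o (f \o phi)) ->
    (\int[P]_w ((f \o phi) w)%:E = \int[pushforward P phi]_t (f t)%:E)%E.
  by move=> mphi f_int; rewrite integral_pushforward ?preimage_setT.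
have eqG : F \o G = f \o (mx_tuple \o G).
  by apply/funext => w /=; rewrite /f /= mx_tupleK.
have eqUG : (fun A => F (U *m A)) \o G = f \o (fun w => mx_tuple (U *m G w)).
  by apply/funext => w /=; rewrite /f /= mx_tupleK.
have intG := orth_integrand_integrable F_int; rewrite eqG in intG.
have intUG := orth_integrand_integrable (orth_integrand_mulmx U_orth F_int).
rewrite eqUG in intUG.
rewrite /EG eqG eqUG /Rintegral; congr fine.
rewrite (push _ measurable_tuple_G intG).
rewrite (push _ (measurable_tuple_of_mulmx U) intUG).
apply: eq_measure_integral;
  [exact: measurable_tuple_of_mulmx | exact: measurable_tuple_G |].
by move=> ? ? B mB _; apply: G_inv U_orth _ (mxBorel_preimage_tuple mB).
Qed.

End HaarExpectation.

Section LeadingProjection.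
Variables (R : realType) (n q : nat) (hq : (q <= n)%N).
Implicit Types A U : 'M[R]_n.

Definition lead_cols A : 'M[R]_(n, q) := colsub (widen_ord hq) A.

Definition proj_lead A : 'M[R]_n := lead_cols A *m (lead_cols A)^T.

Lemma trmx_proj_lead A : (proj_lead A)^T = proj_lead A.
Proof. by rewrite /proj_lead trmx_mul trmxK. Qed.

Lemma proj_lead_sym A i j : proj_lead A j i = proj_lead A i j.
Proof. by rewrite -[in LHS]trmx_proj_lead mxE. Qed.

Lemma proj_lead_mulmx U A : proj_lead (U *m A) = U *m proj_lead A *m U^T.
Proof. by rewrite /proj_lead /lead_cols -mulmx_colsub trmx_mul !mulmxA. Qed.

Lemma lead_cols_orthonormal A :
  Defs.is_orthogonal A -> (lead_cols A)^T *m lead_cols A = 1%:M.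
Proof.
move=> /mulmx1C AtA; apply/matrixP => j k.
have /matrixP/(_ (widen_ord hq j) (widen_ord hq k)) := AtA.
by rewrite !mxE => <-; apply: eq_bigr => i _; rewrite !mxE.
Qed.

Lemma proj_lead_idem A :
  Defs.is_orthogonal A -> proj_lead A *m proj_lead A = proj_lead A.
Proof.
move=> A_orth; rewrite /proj_lead mulmxA -(mulmxA _ _ (lead_cols A)).
by rewrite lead_cols_orthonormal // mulmx1.
Qed.

Lemma mxtrace_proj_lead A : Defs.is_orthogonal A -> \tr (proj_lead A) = q%:R.
Proof. by move=> A_orth; rewrite mxtrace_mulC lead_cols_orthonormal ?mxtrace1. Qed.

Lemma orth_integrand_proj_lead i j : orth_integrand (fun A => proj_lead A i j).
Proof.
have -> : (fun A => proj_lead A i j) =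
    (fun A => \sum_(k <- index_enum 'I_q)
       A i (widen_ord hq k) * A j (widen_ord hq k)).
  by apply/funext => A; rewrite mxE; apply: eq_bigr => k _; rewrite !mxE.
by apply: orth_integrand_sum => k; apply: orth_integrandM;
  apply: orth_integrand_entry.
Qed.

End LeadingProjection.

Section Monomials.
Variables (R : realType) (n : nat).
Implicit Types (X : 'M[R]_n) (s : seq ('I_n * 'I_n)).

Definition mxmonomial s X : R := \prod_(e <- s) X e.1 e.2.

Lemma mxmonomial_perm_conj (sigma : 'S_n) s X :
  mxmonomial s (perm_mx sigma *m X *m (perm_mx sigma)^T) =
  mxmonomial [seq (sigma e.1, sigma e.2) | e <- s] X.
Proof.
rewrite /mxmonomial big_map; apply: eq_bigr => e _.
by rewrite tr_perm_mx -col_permE -row_permE !mxE.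
Qed.

Lemma mxmonomial_sign_conj k s X :
  mxmonomial s (sign_mx k *m X *m (sign_mx k)^T) =
  (-1) ^+ count_mem k (unzip1 s ++ unzip2 s) * mxmonomial s X.
Proof.
rewrite /mxmonomial; elim: s => [|[i j] s IHs]; first by rewrite !big_nil mulr1.
rewrite !big_cons IHs /= count_cat /= tr_diag_mx mul_mx_diag mul_diag_mx !mxE.
rewrite count_cat !exprD; ring.
Qed.

End Monomials.

Section Moments.
Variables (d : measure_display) (Omega : measurableType d) (R : realType).
Variables (P : probability Omega R) (n : nat) (G : Omega -> 'M[R]_n).
Hypothesis HG : haar_orthogonal P G.
Variables (q : nat) (hq : (q <= n)%N).
Implicit Types (s t : seq ('I_n * 'I_n)) (U : 'M[R]_n).

Definition moment s := EG P G (fun A : 'M[R]_n => mxmonomial s (proj_lead hq A)).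

Lemma orth_integrand_moment s :
  orth_integrand (fun A : 'M[R]_n => mxmonomial s (proj_lead hq A)).
Proof.
by apply: orth_integrand_prod => e; apply: orth_integrand_proj_lead.
Qed.

Lemma moment_conj U s : Defs.is_orthogonal U ->
  moment s = EG P G (fun A => mxmonomial s (U *m proj_lead hq A *m U^T)).
Proof.
move=> U_orth; rewrite /moment (EG_mulmx HG U_orth (orth_integrand_moment s)).
by congr EG; apply/funext => A; rewrite proj_lead_mulmx.
Qed.

Lemma moment_relabel (sigma : 'S_n) s :
  moment [seq (sigma e.1, sigma e.2) | e <- s] = moment s.
Proof.
rewrite [RHS](moment_conj _ (perm_mx_orthogonal R sigma)).
by congr EG; apply/funext => A; rewrite mxmonomial_perm_conj.
Qed.

Lemma moment_sign_odd k s :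
  odd (count_mem k (unzip1 s ++ unzip2 s)) -> moment s = 0.
Proof.
set N := count_mem k _ => odd_N.
have : moment s = (-1) ^+ N * moment s.
  rewrite {1}(moment_conj s (sign_mx_orthogonal R k)).
  rewrite -(EGZ HG _ (orth_integrand_moment s)).
  by congr EG; apply/funext => A; rewrite mxmonomial_sign_conj.
rewrite -signr_odd odd_N expr1 mulN1r => /eqP.
by rewrite -addr_eq0 -mulr2n mulrn_eq0 => /eqP.
Qed.

Lemma moment_nil : moment [::] = 1.
Proof.
by rewrite -(EG1 P G); congr EG; apply/funext => A; rewrite /mxmonomial big_nil.
Qed.

Lemma eq_moment s t :
  (forall X : 'M[R]_n, (forall i j, X j i = X i j) ->
     mxmonomial s X = mxmonomial t X) ->
  moment s = moment t.
Proof.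
by move=> eq_st; congr EG; apply/funext => A; apply/eq_st/proj_lead_sym.
Qed.

Lemma moment_cons_idem a c s :
  moment ((a, c) :: s) = \sum_b moment ((a, b) :: (b, c) :: s).
Proof.
rewrite /moment -EG_sum //; last by move=> b; apply: orth_integrand_moment.
apply: eq_EG_orth => // A A_orth; rewrite /mxmonomial big_cons.
rewrite -{1}(proj_lead_idem hq A_orth) mxE big_distrl /=.
by apply: eq_bigr => b _; rewrite !big_cons mulrA.
Qed.

Lemma moment_trace s : q%:R * moment s = \sum_c moment ((c, c) :: s).
Proof.
rewrite /moment -(EGZ HG _ (orth_integrand_moment _)) -EG_sum //; last first.
  by move=> c; apply: orth_integrand_moment.
apply: eq_EG_orth => // A A_orth.
rewrite -(mxtrace_proj_lead hq A_orth) /mxtrace big_distrl /=.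
by apply: eq_bigr => c _; rewrite /mxmonomial big_cons.
Qed.

Lemma EG_moment_combination (F : 'M[R]_n -> R)
    (l : seq (R * seq ('I_n * 'I_n))) :
  (forall A, Defs.is_orthogonal A ->
     F A = \sum_(m <- l) m.1 * mxmonomial m.2 (proj_lead hq A)) ->
  EG P G F = \sum_(m <- l) m.1 * moment m.2.
Proof.
move=> eqF; rewrite (eq_EG_orth HG eqF) EG_sum //; last first.
  by move=> m; apply: orth_integrandM (orth_integrand_cst _ _) _;
    apply: orth_integrand_moment.
by apply: eq_bigr => m _; rewrite (EGZ HG _ (orth_integrand_moment _)).
Qed.

End Moments.

Section LowOrderMoments.
Variables (d : measure_display) (Omega : measurableType d) (R : realType).
Variables (P : probability Omega R) (n : nat) (G : Omega -> 'M[R]_n).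
Hypothesis HG : haar_orthogonal P G.
Variables (q : nat) (hq : (q <= n)%N).
Hypothesis hn : (3 <= n)%N.

Local Notation mom := (moment P G hq).

Let i0 : 'I_n := Ordinal (ltnW (ltnW hn)).
Let i1 : 'I_n := Ordinal (ltnW hn).
Let i2 : 'I_n := Ordinal hn.

Let i0_neq_i1 : i0 != i1. Proof. by []. Qed.

(* [m01_12_20] is E[x_01 x_12 x_20], where x = proj_lead and 0, 1, 2 stand
   for the indices i0, i1, i2; similarly for the other names. *)
Definition m00 := mom [:: (i0, i0)].
Definition m00_00 := mom [:: (i0, i0); (i0, i0)].
Definition m01_10 := mom [:: (i0, i1); (i1, i0)].
Definition m00_11 := mom [:: (i0, i0); (i1, i1)].
Definition m00_00_00 := mom [:: (i0, i0); (i0, i0); (i0, i0)].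
Definition m00_00_11 := mom [:: (i0, i0); (i0, i0); (i1, i1)].
Definition m00_01_10 := mom [:: (i0, i0); (i0, i1); (i1, i0)].
Definition m01_12_20 := mom [:: (i0, i1); (i1, i2); (i2, i0)].

Lemma momentE00 a : mom [:: (a, a)] = m00.
Proof. by rewrite /m00 -[RHS](moment_relabel HG hq (tperm i0 a)) /= tpermL. Qed.

Lemma momentE00_00 a : mom [:: (a, a); (a, a)] = m00_00.
Proof. by rewrite /m00_00 -[RHS](moment_relabel HG hq (tperm i0 a)) /= tpermL. Qed.

Lemma momentE00_00_00 a : mom [:: (a, a); (a, a); (a, a)] = m00_00_00.
Proof.
by rewrite /m00_00_00 -[RHS](moment_relabel HG hq (tperm i0 a)) /= tpermL.
Qed.

Section TwoIndices.
Variables (a b : 'I_n).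
Hypothesis ab : a != b.

Let relabel2 : exists s : 'S_n, s i0 = a /\ s i1 = b.
Proof. exact: perm_move2. Qed.

Lemma momentE01_10 : mom [:: (a, b); (b, a)] = m01_10.
Proof.
have [s [s0 s1]] := relabel2.
by rewrite /m01_10 -[RHS](moment_relabel HG hq s) /= s0 s1.
Qed.

Lemma momentE00_11 : mom [:: (a, a); (b, b)] = m00_11.
Proof.
have [s [s0 s1]] := relabel2.
by rewrite /m00_11 -[RHS](moment_relabel HG hq s) /= s0 s1.
Qed.

Lemma momentE00_00_11 : mom [:: (a, a); (a, a); (b, b)] = m00_00_11.
Proof.
have [s [s0 s1]] := relabel2.
by rewrite /m00_00_11 -[RHS](moment_relabel HG hq s) /= s0 s1.
Qed.

Lemma momentE00_01_10 : mom [:: (a, a); (a, b); (b, a)] = m00_01_10.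
Proof.
have [s [s0 s1]] := relabel2.
by rewrite /m00_01_10 -[RHS](moment_relabel HG hq s) /= s0 s1.
Qed.

End TwoIndices.

Lemma momentE01_12_20 a b c : [&& a != b, a != c & b != c] ->
  mom [:: (a, b); (b, c); (c, a)] = m01_12_20.
Proof.
move=> abc; have [|s [s0 s1 s2]] := @perm_move3 _ i0 i1 i2 a b c _ abc => //.
by rewrite /m01_12_20 -[RHS](moment_relabel HG hq s) /= s0 s1 s2.
Qed.

Lemma m00E : n%:R * m00 = q%:R.
Proof.
have -> : q%:R = q%:R * mom [::] by rewrite moment_nil mulr1.
rewrite moment_trace //.
rewrite (eq_bigr (fun _ => m00)) => [|c _]; last exact: momentE00.
by rewrite sumr_const card_ord mulr_natl.
Qed.

Lemma m00_idem : m00 = m00_00 + (n%:R - 1) * m01_10.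
Proof.
rewrite {1}/m00 moment_cons_idem //.
apply: sum_const_but1 => [|b bi0] //.
by rewrite momentE01_10 // eq_sym.
Qed.

Lemma m00_trace : q%:R * m00 = m00_00 + (n%:R - 1) * m00_11.
Proof.
rewrite moment_trace //; apply: sum_const_but1 => [|c ci0] //.
exact: momentE00_11.
Qed.

Lemma m00_00_trace : q%:R * m00_00 = m00_00_00 + (n%:R - 1) * m00_00_11.
Proof.
rewrite moment_trace //; apply: sum_const_but1 => [|c ci0] //.
have i0c : i0 != c by rewrite eq_sym.
rewrite -(momentE00_00_11 i0c); apply: eq_moment => // X _.
by rewrite /mxmonomial !big_cons !big_nil; ring.
Qed.

Lemma m00_00_idem : m00_00 = m00_00_00 + (n%:R - 1) * m00_01_10.
Proof.
rewrite {1}/m00_00 moment_cons_idem //.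
apply: sum_const_but1 => [|b bi0] //; have i0b : i0 != b by rewrite eq_sym.
rewrite -(momentE00_01_10 i0b); apply: eq_moment => // X _.
by rewrite /mxmonomial !big_cons !big_nil; ring.
Qed.

Lemma m01_10_idem : m01_10 = m00_01_10 + m00_01_10 + (n%:R - 2) * m01_12_20.
Proof.
rewrite {1}/m01_10 moment_cons_idem //.
apply: (sum_const_but2 (a := i0) (b := i1)) => // [|b bi0 bi1].
  rewrite -(momentE00_01_10 (_ : i1 != i0)) //; apply: eq_moment => // X _.
  by rewrite /mxmonomial !big_cons !big_nil; ring.
by apply: momentE01_12_20; rewrite !(eq_sym _ b) bi0 bi1.
Qed.

(* The Householder reflection along e_0 + 2 e_1 has first row
   (3/5, -4/5, 0, ..., 0); invariance under this mixing of two coordinates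
   yields the relations that signed permutations cannot give. *)
Let axis : 'cV[R]_n := delta_mx i0 0 + 2%:R *: delta_mx i1 0.
Let refl : 'M[R]_n := 1%:M - (2 / 5) *: (axis *m axis^T).
Let r00 : R := 3 / 5.
Let r01 : R := - 4 / 5.

Let axis_entry l k : axis l k = (l == i0)%:R + 2 * (l == i1)%:R.
Proof. by rewrite !mxE (ord1 k) !eqxx !andbT mulr_natr. Qed.

Let reflection_orthogonal : Defs.is_orthogonal refl.
Proof.
apply: householder_orthogonal; rewrite mxE.
rewrite (eq_bigr (fun l => (l == i0)%:R * 1 + (l == i1)%:R * 4)) => [|l _].
  by rewrite big_split /= !sum_delta; field.
rewrite mxE axis_entry; have [->|li0] := eqVneq l i0.
  by rewrite (negPf i0_neq_i1) /= mulr1n mulr0n; ring.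
by case: (l == i1); rewrite /= ?mulr1n ?mulr0n; ring.
Qed.

Let reflection_row j : refl i0 j = r00 * (j == i0)%:R + r01 * (j == i1)%:R.
Proof.
rewrite !mxE big_ord1 [axis^T _ _]mxE !axis_entry eqxx (negPf i0_neq_i1) eq_sym.
rewrite /r00 /r01; have [->|ji0] := eqVneq j i0.
  by rewrite (negPf i0_neq_i1) /=; field.
by case: (j == i1); rewrite /=; field.
Qed.

Let reflection_entry (X : 'M[R]_n) : (forall i j, X j i = X i j) ->
  (refl *m X *m refl^T) i0 i0 =
  r00 ^+ 2 * X i0 i0 + 2 * r00 * r01 * X i0 i1 + r01 ^+ 2 * X i1 i1.
Proof.
by move=> Xsym; rewrite (mulmx_tr_entry_two_point _ reflection_row) Xsym; ring.
Qed.

Lemma m00_00_reflect : m00_00 = m00_11 + 2 * m01_10.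
Proof.
have := moment_conj HG hq [:: (i0, i0); (i0, i0)] reflection_orthogonal.
rewrite (EG_moment_combination HG (hq := hq) (l := [::
    (r00 ^+ 4, [:: (i0, i0); (i0, i0)]);
    (4 * r00 ^+ 2 * r01 ^+ 2, [:: (i0, i1); (i1, i0)]);
    (r01 ^+ 4, [:: (i1, i1); (i1, i1)]);
    (4 * r00 ^+ 3 * r01, [:: (i0, i0); (i0, i1)]);
    (2 * r00 ^+ 2 * r01 ^+ 2, [:: (i0, i0); (i1, i1)]);
    (4 * r00 * r01 ^+ 3, [:: (i0, i1); (i1, i1)])])) => [|A _]; last first.
  rewrite /mxmonomial !big_cons !big_nil /= reflection_entry;
    last exact: proj_lead_sym.
  by rewrite (proj_lead_sym hq A i0 i1); ring.
rewrite !big_cons big_nil /= -/m00_00 -/m01_10 -/m00_11 momentE00_00.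
rewrite (moment_sign_odd HG hq (k := i1)
  (s := [:: (i0, i0); (i0, i1)])) //.
rewrite (moment_sign_odd HG hq (k := i0)
  (s := [:: (i0, i1); (i1, i1)])) //.
rewrite /r00 /r01; lra.
Qed.

Lemma m00_00_00_reflect : m00_00_00 = m00_00_11 + 4 * m00_01_10.
Proof.
pose a := r00 ^+ 2; pose b := 2 * r00 * r01; pose g := r01 ^+ 2.
have := moment_conj HG hq [:: (i0, i0); (i0, i0); (i0, i0)] reflection_orthogonal.
rewrite (EG_moment_combination HG (hq := hq) (l := [::
    (a ^+ 3, [:: (i0, i0); (i0, i0); (i0, i0)]);
    (g ^+ 3, [:: (i1, i1); (i1, i1); (i1, i1)]);
    (3 * a ^+ 2 * g, [:: (i0, i0); (i0, i0); (i1, i1)]);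
    (3 * a * g ^+ 2, [:: (i1, i1); (i1, i1); (i0, i0)]);
    (3 * a * b ^+ 2, [:: (i0, i0); (i0, i1); (i1, i0)]);
    (3 * g * b ^+ 2, [:: (i1, i1); (i1, i0); (i0, i1)]);
    (3 * a ^+ 2 * b, [:: (i0, i0); (i0, i0); (i0, i1)]);
    (b ^+ 3, [:: (i0, i1); (i0, i1); (i0, i1)]);
    (6 * a * b * g, [:: (i0, i0); (i0, i1); (i1, i1)]);
    (3 * b * g ^+ 2, [:: (i0, i1); (i1, i1); (i1, i1)])])) => [|A _]; last first.
  rewrite /mxmonomial !big_cons !big_nil /= reflection_entry;
    last exact: proj_lead_sym.
  by rewrite (proj_lead_sym hq A i0 i1) /a /b /g; ring.
rewrite !big_cons big_nil /= -/m00_00_00 -/m00_00_11 -/m00_01_10.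
rewrite momentE00_00_00 (momentE00_00_11 (_ : i1 != i0)) //.
rewrite (momentE00_01_10 (_ : i1 != i0)) //.
rewrite (moment_sign_odd HG hq (k := i1)
  (s := [:: (i0, i0); (i0, i0); (i0, i1)])) //.
rewrite (moment_sign_odd HG hq (k := i0)
  (s := [:: (i0, i1); (i0, i1); (i0, i1)])) //.
rewrite (moment_sign_odd HG hq (k := i1)
  (s := [:: (i0, i0); (i0, i1); (i1, i1)])) //.
rewrite (moment_sign_odd HG hq (k := i0)
  (s := [:: (i0, i1); (i1, i1); (i1, i1)])) //.
rewrite /a /b /g /r00 /r01; lra.
Qed.

Lemma m00_00E : (n%:R + 2) * m00_00 = (q%:R + 2) * m00.
Proof.
apply/eqP; rewrite -subr_eq0; apply/eqP; transitivity (
  (n%:R - 1) * (m00_00 - (m00_11 + 2 * m01_10)) +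
  (m00_00 + (n%:R - 1) * m00_11 - q%:R * m00) +
  2 * (m00_00 + (n%:R - 1) * m01_10 - m00)); first ring.
by rewrite -m00_00_reflect -m00_trace -m00_idem !subrr !mulr0 !addr0.
Qed.

Lemma m00_01_10E :
  (n%:R + 4) * (n%:R - 1) * m00_01_10 = (n%:R - q%:R) * m00_00.
Proof.
apply/eqP; rewrite -subr_eq0; apply/eqP; transitivity (
  n%:R * (m00_00_00 + (n%:R - 1) * m00_01_10 - m00_00) -
  (m00_00_00 + (n%:R - 1) * m00_00_11 - q%:R * m00_00) +
  (n%:R - 1) * (m00_00_11 + 4 * m00_01_10 - m00_00_00)); first ring.
by rewrite -m00_00_idem -m00_00_trace -m00_00_00_reflect !subrr !mulr0 subrr addr0.
Qed.

Variables (p : nat) (hp : (p <= n)%N).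
Let wp := widen_ord hp.

Definition cycle_sum (A : 'M[R]_n) : R := \sum_(a < p) \sum_(b < p) \sum_(c < p)
  mxmonomial [:: (wp a, wp b); (wp b, wp c); (wp c, wp a)] (proj_lead hq A).

Lemma orth_integrand_cycle_sum : orth_integrand cycle_sum.
Proof.
by do 3!apply: orth_integrand_sum => ?; apply: orth_integrand_moment.
Qed.

Lemma EG_cycle_sum : EG P G cycle_sum =
  p%:R * (m00_00_00 + (p%:R - 1) * m00_01_10 +
    (p%:R - 1) * (2 * m00_01_10 + (p%:R - 2) * m01_12_20)).
Proof.
have wpE a b : (wp a != wp b) = (a != b).
  by congr negb; apply/eqP/eqP => [/(congr1 val)/val_inj|->].
rewrite /cycle_sum EG_sum //; last first.
  by move=> a; do 2!apply: orth_integrand_sum => ?; apply: orth_integrand_moment.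
rewrite (eq_bigr (fun _ => m00_00_00 + (p%:R - 1) * m00_01_10 +
    (p%:R - 1) * (m00_01_10 + m00_01_10 + (p%:R - 2) * m01_12_20))).
  by rewrite sumr_const card_ord mulr_natl; ring.
move=> a _; rewrite EG_sum //; last first.
  by move=> b; apply: orth_integrand_sum => ?; apply: orth_integrand_moment.
apply: sum_const_but1 => [|b ba]; rewrite EG_sum //;
  try by move=> c; apply: orth_integrand_moment.
  apply: sum_const_but1 => [|c ca]; first exact: momentE00_00_00.
  by apply: momentE00_01_10; rewrite wpE eq_sym.
have wab : wp a != wp b by rewrite wpE eq_sym.
apply: (sum_const_but2 (a := a) (b := b)); rewrite 1?eq_sym //.
- rewrite -(momentE00_01_10 wab); apply: eq_moment => // X _.
  by rewrite /mxmonomial !big_cons !big_nil; ring.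
- rewrite -(momentE00_01_10 (_ : wp b != wp a)) 1?eq_sym //.
  apply: eq_moment => // X _.
  by rewrite /mxmonomial !big_cons !big_nil; ring.
- by move=> c ca cb; apply: momentE01_12_20; rewrite wab !wpE eq_sym ca eq_sym cb.
Qed.

Lemma EG_cycle_sumE : EG P G cycle_sum =
  p%:R * q%:R / (n%:R * (n%:R + 2) * (n%:R + 4))
    * (p%:R ^+ 2 + q%:R ^+ 2 + 3 * p%:R * q%:R + 3 * (p%:R + q%:R) + 4)
  + p%:R * q%:R * (p%:R - 1) * (q%:R - 1)
      / ((n%:R - 1) * n%:R * (n%:R + 2) * (n%:R + 4))
    * (2 * (p%:R - 2) * (q%:R - 2) / (n%:R - 2) - 3 * (p%:R + q%:R)).
Proof.
have n3 : (3 : R) <= n%:R by rewrite (ler_nat R 3 n).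
have n0 : n%:R != 0 :> R by apply/eqP; lra.
have n1 : n%:R - 1 != 0 :> R by apply/eqP; lra.
have n2 : n%:R - 2 != 0 :> R by apply/eqP; lra.
have n2' : n%:R + 2 != 0 :> R by apply/eqP; lra.
have n4 : n%:R + 4 != 0 :> R by apply/eqP; lra.
have E00 : m00 = q%:R / n%:R by rewrite -m00E; field.
have E00_00 : m00_00 = (q%:R + 2) * m00 / (n%:R + 2) by rewrite -m00_00E; field.
have E01_10 : m01_10 = (m00 - m00_00) / (n%:R - 1).
  by rewrite m00_idem; field; exact: n1.
have E00_01_10 : m00_01_10 = (n%:R - q%:R) * m00_00 / ((n%:R + 4) * (n%:R - 1)).
  by rewrite -m00_01_10E; field; rewrite ?n1 ?n4.
have E00_00_00 : m00_00_00 = m00_00 - (n%:R - 1) * m00_01_10.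
  by rewrite m00_00_idem; ring.
have E01_12_20 : m01_12_20 = (m01_10 - 2 * m00_01_10) / (n%:R - 2).
  by rewrite m01_10_idem; field; exact: n2.
rewrite EG_cycle_sum E01_12_20 E00_00_00 E01_10 E00_01_10 E00_00 E00.
by field; rewrite n0 n1 n2 n2' n4.
Qed.

End LowOrderMoments.

Lemma ul_submx_gram_entry (R : realType) n p q (hp : (p <= n)%N) (hq : (q <= n)%N)
    (A : 'M[R]_n) a b :
  (ul_submx hp hq A *m (ul_submx hp hq A)^T) a b =
  proj_lead hq A (widen_ord hp a) (widen_ord hp b).
Proof. by rewrite !mxE; apply: eq_bigr => j _; rewrite !mxE. Qed.

Theorem lemma2p6 (d : measure_display) (Omega : measurableType d)
  (R : realType) (P : probability Omega R) (n p q : nat)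
  (hn : (3 <= n)%N) (hp1 : (1 <= p)%N) (hp : (p <= n)%N)
  (hq1 : (1 <= q)%N) (hq : (q <= n)%N)
  (G : Omega -> 'M[R]_n) (HG : haar_orthogonal P G)
  (lam : Omega -> 'I_q -> R)
  (Hlam : forall w,
     char_poly ((ul_submx hp hq (G w))^T *m ul_submx hp hq (G w))
     = \prod_(i < q) ('X - (lam w i)%:P)) :
  (\int[P]_w (\sum_(i < q) lam w i ^+ 3)%:E =
   ((p%:R * q%:R / (n%:R * (n%:R + 2) * (n%:R + 4))
       * (p%:R ^+ 2 + q%:R ^+ 2 + 3 * p%:R * q%:R + 3 * (p%:R + q%:R) + 4)
     + p%:R * q%:R * (p%:R - 1) * (q%:R - 1)
         / ((n%:R - 1) * n%:R * (n%:R + 2) * (n%:R + 4))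
       * (2 * (p%:R - 2) * (q%:R - 2) / (n%:R - 2) - 3 * (p%:R + q%:R)))
    : R)%:E)%E.
Proof.
have cube w : \sum_(i < q) lam w i ^+ 3 = cycle_sum hq hp (G w).
  rewrite -(mxtrace_exp_real_roots 3 (Hlam w)) mxtrace_gram_exp mxtrace_cube.
  apply: eq_bigr => a _; apply: eq_bigr => b _; apply: eq_bigr => c _.
  by rewrite /mxmonomial !big_cons big_nil mulr1 !ul_submx_gram_entry mulrA.
under eq_integral do rewrite cube.
by rewrite (integral_EG HG (orth_integrand_cycle_sum R hq hp)) (EG_cycle_sumE HG).
Qed.
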